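(* $(\mathfrak{P}(X),\preceq)$ is a bounded graded poset with minimum element $\{(\{x\},\emptyset):x\in X\}$ and maximum element $\{(X,\emptyset)\}$. Its height function is $h:\mathfrak{P}(X)\to\{0,1,\dots,|X|-1\}$, $h(\mathcal{S})=|X|-|\mathcal{P}(\mathcal{S})|+|\mathcal{H}(\mathcal{S})|$.
   Context: Let $X$ be a finite non-empty set. A set pair system on $X$ is a set of ordered pairs $(S,H)$ of subsets of $X$ with $S\ne\emptyset$ and $S\cap H=\emptyset$. On set pairs, $(S_1,H_1)\le(S_2,H_2)$ iff they are equal or one of: $S_1\cup H_1\subseteq S_2$; $S_1\cup H_1\subseteq H_2$; $S_1\subsetneq S_2$ and $H_1=H_2\ne\emptyset$. For set pair systems, $\mathcal{S}_1\preceq\mathcal{S}_2$ iff (SP1) for every $(S_1,H_1)\in\mathcal{S}_1$ there is $(S_2,H_2)\in\mathcal{S}_2$ with $(S_1,H_1)\le(S_2,H_2)$, and (SP2) for every $(S_2,H_2)\in\mathcal{S}_2$ with $H_2\ne\emptyset$, if some $(S_1,H_1)\in\mathcal{S}_1$ has $H_1=H_2$ then some such $(S_1,H_1)$ satisfies $(S_1,H_1)\le(S_2,H_2)$. A polestar system is a set pair system $\mathcal{S}$ with (PL1) $\mathcal{P}(\mathcal{S})=\{S:(S,H)\in\mathcal{S}\}$ is a partition of $X$; (PL2) distinct $(S,H),(S',H')\in\mathcal{S}$ have $S\ne S'$; (PL3) for each $(S,H)\in\mathcal{S}$ with $H\ne\emptyset$, $(H,\emptyset)\in\mathcal{S}$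 and there is exactly one $(S',H')\in\mathcal{S}$ with $(S',H')\ne(S,H)$ and $H'=H$. $\mathcal{H}(\mathcal{S})=\{H:(S,H)\in\mathcal{S},H\ne\emptyset\}$; $\mathfrak{P}(X)$ is the set of polestar systems on $X$. A poset is bounded if it has a minimum and a maximum; a chain is a non-empty set of pairwise comparable elements, of length (number of elements minus one); the poset is graded if all maximal chains have the same length; its height function assigns to $a$ the maximum length of a chain all of whose elements are $\le a$. *)

From mathcomp Require Import all_boot.
Set Implicit Arguments. Unset Strict Implicit. Unset Printing Implicit Defensive.

(* X is modelled by a finite type T (nonemptiness is a hypothesis of the theorem). *)
Section Polestar.
Variable T : finType.

Definition setpair := ({set T} * {set T})%type.
Definition sps := {set setpair}.

Definition sp_le (p q : setpair) : bool :=
  [|| p == q,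
      (p.1 :|: p.2) \subset q.1,
      (p.1 :|: p.2) \subset q.2
    | [&& p.1 \proper q.1, p.2 == q.2 & p.2 != set0]].

Definition sps_le (A B : sps) : bool :=
  [forall p in A, exists q in B, sp_le p q] &&
  [forall q in B, (q.2 != set0) ==>
     ([exists p in A, p.2 == q.2] ==>
      [exists p in A, (p.2 == q.2) && sp_le p q])].

Definition is_sps (A : sps) : bool :=
  [forall p in A, (p.1 != set0) && [disjoint p.1 & p.2]].

Definition Pof (A : sps) : {set {set T}} := [set p.1 | p in A].
Definition Hof (A : sps) : {set {set T}} := [set p.2 | p in A & p.2 != set0].

Definition polestar (A : sps) : bool :=
  [&& is_sps A,
      partition (Pof A) [set: T],
      [forall p in A, forall q in A, (p.1 == q.1) ==> (p == q)]
    & [forall p in A, (p.2 != set0) ==>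
         (((p.2, set0) \in A) &&
          (#|[set q in A | (q != p) && (q.2 == p.2)]| == 1))]].

Definition is_chain (C : {set sps}) : Prop :=
  C != set0 /\ (forall A, A \in C -> polestar A) /\
  (forall A B, A \in C -> B \in C -> sps_le A B \/ sps_le B A).

Definition chain_length (C : {set sps}) : nat := #|C|.-1.

Definition maximal_chain (C : {set sps}) : Prop :=
  is_chain C /\ (forall C', is_chain C' -> C \subset C' -> C' = C).

Definition graded : Prop :=
  forall C1 C2, maximal_chain C1 -> maximal_chain C2 ->
    chain_length C1 = chain_length C2.

Definition is_height (a : sps) (n : nat) : Prop :=
  (exists C, [/\ is_chain C, (forall b, b \in C -> sps_le b a) & chain_length C = n]) /\
  (forall C, is_chain C -> (forall b, b \in C -> sps_le b a) -> chain_length C <= n).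

Definition min_sys : sps := [set ([set x], set0) | x : T].
Definition max_sys : sps := [set ([set: T], set0)].

Definition hfun (A : sps) : nat := #|T| - #|Pof A| + #|Hof A|.

End Polestar.

(* Count the pairs (S, H) of a polestar system A whose block S is not a pole.  Since
   H |-> (H, emptyset) matches the poles of A with the pole blocks, hfun A is |X| minus
   this count.  The count never increases along the order, and whenever A < B one can
   move from A towards B by one of three elementary steps lowering it by exactly one:
   fuse a star whose pole disappears in B with its partner and their pole into a single
   block; merge two non-pole blocks lying in a common block of B; or install on blocks
   of A a star pair of B whose pole is new.  So the count is a rank function: maximal
   chains run from the minimum (count |X|) to the maximum (count 1) through every value
   in between, and the height of A is hfun A. *)

From mathcomp Require Import all_boot zify.
From Stdlib Require Import Classical.
Set Implicit Arguments. Unset Strict Implicit. Unset Printing Implicit Defensive.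

Section PolestarPoset.
Variable T : finType.
Implicit Types (A B C a b c : sps T) (D : {set sps T}) (p q r : setpair T) (X Y : {set T}).

Definition is_pole A X := [exists q in A, (q.2 != set0) && (q.2 == X)].
Definition nonpoles A := [set p in A | ~~ is_pole A p.1].

Record polestar_spec A : Prop := PolestarSpec {
  ps_block_neq0 : forall p, p \in A -> p.1 != set0;
  ps_disjoint : forall p, p \in A -> [disjoint p.1 & p.2];
  ps_cover : forall x, exists2 p, p \in A & x \in p.1;
  ps_block_uniq : forall p q x, p \in A -> q \in A -> x \in p.1 -> x \in q.1 -> p = q;
  ps_pole_mem : forall p, p \in A -> p.2 != set0 -> (p.2, set0) \in A;
  ps_partner : forall p, p \in A -> p.2 != set0 ->
     exists q, [/\ q \in A, q != p, q.2 = p.2 &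
        forall r, r \in A -> r != p -> r.2 = p.2 -> r = q]
}.

Lemma spec_of_polestar A : polestar A -> polestar_spec A.
Proof.
case/and4P => /forall_inP hs /and3P [/eqP hcov /trivIsetP htriv _]
   /forall_inP hPL2 /forall_inP hPL3.
have uniq : forall p q x, p \in A -> q \in A -> x \in p.1 -> x \in q.1 -> p = q.
  move=> p q x pA qA xp xq.
  have e1 : p.1 = q.1.
    apply/eqP; apply: contraTT isT => ne.
    have := htriv _ _ (imset_f (fun p : setpair T => p.1) pA)
                      (imset_f (fun p : setpair T => p.1) qA) ne.
    by move/disjointFr => /(_ _ xp); rewrite xq.
  by have := hPL2 _ pA => /forall_inP /(_ _ qA); rewrite e1 eqxx => /eqP.
constructor.
- by move=> p /hs /andP [].
- by move=> p /hs /andP [].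
- move=> x; have : x \in cover (Pof A) by rewrite hcov inE.
  by case/bigcupP => S /imsetP [p pA ->] xS; exists p.
- exact: uniq.
- by move=> p /hPL3 /implyP h /h /andP [].
- move=> p pA ne; have := hPL3 _ pA; rewrite ne /= => /andP [_ /cards1P [q eq]].
  have : q \in [set q0 in A | (q0 != p) && (q0.2 == p.2)] by rewrite eq set11.
  rewrite inE => /and3P [qA qp /eqP q2]; exists q; split => //.
  move=> r rA rp r2.
  have : r \in [set q0 in A | (q0 != p) && (q0.2 == p.2)] by rewrite inE rA rp r2 eqxx.
  by rewrite eq inE => /eqP.
Qed.

Lemma polestar_of_spec A : polestar_spec A -> polestar A.
Proof.
case => hne hdis hcov huniq hpole hmate.
apply/and4P; split.
- by apply/forall_inP => p pA; rewrite hne ?hdis.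
- apply/and3P; split.
  + apply/eqP/setP => x; rewrite inE; apply/bigcupP.
    by have [p pA xp] := hcov x; exists p.1 => //; apply: imset_f.
  + apply/trivIsetP => S1 S2 /imsetP [p pA ->] /imsetP [q qA ->] ne.
    rewrite -setI_eq0; apply/eqP/setP => x; rewrite !inE.
    by apply/negP => /andP [xp xq]; move: ne; rewrite (huniq _ _ _ pA qA xp xq) eqxx.
  + by apply/imsetP => [[p pA e]]; move: (hne _ pA); rewrite -e eqxx.
- apply/forall_inP => p pA; apply/forall_inP => q qA; apply/implyP => /eqP e.
  have [x xp] := set0Pn _ (hne _ pA).
  by rewrite (huniq _ _ x pA qA) // -e.
- apply/forall_inP => p pA; apply/implyP => ne; rewrite hpole //=.
  have [q [qA qp q2 qu]] := hmate _ pA ne.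
  apply/cards1P; exists q; apply/setP => r; rewrite !inE.
  apply/idP/idP.
  + by case/and3P => rA rp /eqP r2; rewrite (qu _ rA rp r2).
  + by move/eqP ->; rewrite qA qp q2 eqxx.
Qed.

Lemma polestarP A : polestar A <-> polestar_spec A.
Proof. by split; [exact: spec_of_polestar | exact: polestar_of_spec]. Qed.

Lemma pair_ext p q : p.1 = q.1 -> p.2 = q.2 -> p = q.
Proof. by move: p q => [a b] [c d] /= -> ->. Qed.

Lemma sp_leP p q : sp_le p q -> [\/ p = q, p.1 :|: p.2 \subset q.1, p.1 :|: p.2 \subset q.2 |
   [/\ p.1 \proper q.1, p.2 = q.2 & p.2 != set0]].
Proof.
rewrite /sp_le; case/or4P => [/eqP|||/and3P [? /eqP ? ?]]; by [constructor 1|constructor 2|constructor 3|constructor 4].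
Qed.

Lemma sp_le_refl p : sp_le p p.
Proof. by rewrite /sp_le eqxx. Qed.

Lemma sp_le_trans p q r : sp_le p q -> sp_le q r -> sp_le p r.
Proof.
move=> /sp_leP [->//|h1|h1|[h1 h2 h3]] /sp_leP [<-|h4|h4|[h4 h5 h6]];
 rewrite /sp_le; apply/or4P.
- by constructor 2.
- by constructor 2; apply: subset_trans h1 (subset_trans (subsetUl _ _) h4).
- by constructor 3; apply: subset_trans h1 (subset_trans (subsetUl _ _) h4).
- by constructor 2; apply: subset_trans h1 (proper_sub h4).
- by constructor 3.
- by constructor 2; apply: subset_trans h1 (subset_trans (subsetUr _ _) h4).
- by constructor 3; apply: subset_trans h1 (subset_trans (subsetUr _ _) h4).
- by constructor 3; rewrite -h5.
- by constructor 4; rewrite h1 h3 h2 !eqxx.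
- by constructor 2; apply: subset_trans h4; rewrite h2; apply: setSU; apply: proper_sub.
- by constructor 3; apply: subset_trans h4; rewrite h2; apply: setSU; apply: proper_sub.
- by constructor 4; rewrite (proper_trans h1 h4) h3 h2 h5 eqxx.
Qed.

Lemma sps_le_SP1 A B p : sps_le A B -> p \in A -> exists2 q, q \in B & sp_le p q.
Proof. by case/andP => /forall_inP h _ /h /exists_inP. Qed.

Lemma sps_le_SP2 A B q : sps_le A B -> q \in B -> q.2 != set0 -> (exists2 p, p \in A & p.2 = q.2) ->
  exists2 p, p \in A & p.2 = q.2 /\ sp_le p q.
Proof.
case/andP => _ /forall_inP h qB ne [p0 p0A e].
have := h _ qB; rewrite ne /= => /implyP h'.
have /exists_inP [p pA /andP [/eqP e2 le]] := h' (introT exists_inP (ex_intro2 _ _ p0 p0A (introT eqP e))).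
by exists p.
Qed.

Lemma sps_leI A B : (forall p, p \in A -> exists2 q, q \in B & sp_le p q) ->
  (forall q, q \in B -> q.2 != set0 -> (exists2 p, p \in A & p.2 = q.2) ->
     exists2 p, p \in A & p.2 = q.2 /\ sp_le p q) -> sps_le A B.
Proof.
move=> h1 h2; apply/andP; split.
  by apply/forall_inP => p /h1 [q qB le]; apply/exists_inP; exists q.
apply/forall_inP => q qB; apply/implyP => ne; apply/implyP => /exists_inP [p0 p0A /eqP e].
have [p pA [e2 le]] := h2 _ qB ne (ex_intro2 _ _ p0 p0A e).
by apply/exists_inP; exists p => //; rewrite e2 eqxx.
Qed.

Lemma sps_le_refl A : sps_le A A.
Proof.
apply: sps_leI => [p pA|q qA _ _]; first by exists p => //; apply: sp_le_refl.
by exists q => //; split => //; apply: sp_le_refl.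
Qed.

Lemma nonempty_disjoint_subsetF X Y : X != set0 -> [disjoint X & Y] -> X \subset Y -> False.
Proof. by move=> ne dis; apply/negP: (subsetC_disjoint dis ne (subxx X)). Qed.

Lemma subUset_split X Y (Z : {set T}) : X :|: Y \subset Z -> X \subset Z /\ Y \subset Z.
Proof. by rewrite subUset => /andP. Qed.

Lemma disjointsU X Y (Z : {set T}) : [disjoint X & Z] -> [disjoint Y & Z] -> [disjoint X :|: Y & Z].
Proof. by rewrite -!setI_eq0 setIUl => /eqP -> /eqP ->; rewrite setU0. Qed.

Lemma disjoints0 X : [disjoint X & (set0 : {set T})].
Proof. by rewrite -setI_eq0 setI0. Qed.

Lemma cards3 (U : finType) (a b c : U) : a != b -> a != c -> b != c -> #|[set a; b; c]| = 3.
Proof.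
move=> ab ac bc.
have -> : [set a; b; c] = a |: [set b; c] by apply/setP => x; rewrite !inE orbA.
by rewrite cardsU1 cards2 bc !inE negb_or ab ac.
Qed.

Lemma card_setU1D (U : finType) (x : U) (N S : {set U}) k :
  S \subset N -> x \notin N -> #|S| = k.+1 -> #|x |: (N :\: S)| + k = #|N|.
Proof.
move=> sSN xN cS; rewrite cardsU1 inE (negbTE xN) andbF cardsD (setIidPr sSN) cS.
by have := subset_leq_card sSN; rewrite cS; lia.
Qed.

Section PolestarFacts.
Variable A : sps T.
Hypothesis hA : polestar_spec A.

Lemma ps_block_inj p q : p \in A -> q \in A -> p.1 = q.1 -> p = q.
Proof.
move=> pA qA e; have [x xp] := set0Pn _ (ps_block_neq0 hA pA).
by apply: (ps_block_uniq hA pA qA xp); rewrite -e.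
Qed.

Lemma ps_block_subset_inj p q : p \in A -> q \in A -> p.1 \subset q.1 -> p = q.
Proof.
move=> pA qA s; have [x xp] := set0Pn _ (ps_block_neq0 hA pA).
by apply: (ps_block_uniq hA pA qA xp); apply: (subsetP s).
Qed.

Lemma ps_blocks_disjoint p q : p \in A -> q \in A -> p != q -> [disjoint p.1 & q.1].
Proof.
move=> pA qA ne; rewrite -setI_eq0; apply/eqP/setP => x; rewrite !inE.
by apply/negP => /andP [xp xq]; move: ne; rewrite (ps_block_uniq hA pA qA xp xq) eqxx.
Qed.

Lemma is_poleP X : reflect (exists2 q, q \in A & q.2 != set0 /\ q.2 = X) (is_pole A X).
Proof.
apply: (iffP exists_inP) => [[q qA /andP [ne /eqP e]]|[q qA [ne e]]]; exists q => //.
by rewrite ne e eqxx.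
Qed.

Lemma pole_mem X : is_pole A X -> (X, set0) \in A.
Proof. by case/is_poleP => q qA [ne <-]; apply: (ps_pole_mem hA). Qed.

Lemma star_nonpole p : p \in A -> p.2 != set0 -> ~~ is_pole A p.1.
Proof.
move=> pA ne; apply/negP => /pole_mem h.
by have := ps_block_inj pA h erefl => e; move: ne; rewrite e eqxx.
Qed.

Lemma star_block_neq_pole p : p \in A -> p.2 != set0 -> p.1 != p.2.
Proof.
move=> pA ne; apply/eqP => e; apply: (nonempty_disjoint_subsetF (ps_block_neq0 hA pA) (ps_disjoint hA pA)).
by rewrite e.
Qed.

End PolestarFacts.

Lemma sp_le_samepole_sub p q : p.1 != set0 -> [disjoint p.1 & p.2] -> q.2 = p.2 -> sp_le p q ->
  p.1 \subset q.1.
Proof.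
move=> ne dis e /sp_leP [->//|/subUset_split [s1 s2]|/subUset_split [s1 s2]|[pr _ _]].
- by [].
- by exfalso; rewrite e in s1; exact: nonempty_disjoint_subsetF ne dis s1.
- exact: proper_sub.
Qed.

Section Comparable.
Variables A B : sps T.
Hypotheses (hA : polestar_spec A) (hB : polestar_spec B) (hle : sps_le A B).

Lemma le_block_sub p : p \in A -> exists2 q, q \in B & p.1 \subset q.1.
Proof.
move=> pA; have [q qB] := sps_le_SP1 hle pA.
move/sp_leP => [e|/subUset_split [s1 s2]|/subUset_split [s1 s2]|[pr _ _]].
- by subst q; exists p.
- by exists q.
- have ne : q.2 != set0.
    apply: contraNN (ps_block_neq0 hA pA) => /eqP e; by rewrite -subset0 -e.
  by exists (q.2, set0) => //; apply: (ps_pole_mem hB).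
- by exists q => //; apply: proper_sub.
Qed.

Lemma le_star_kept p : p \in A -> p.2 != set0 -> (exists2 q0, q0 \in B & q0.2 = p.2) ->
  exists2 q, q \in B & q.2 = p.2 /\ p.1 \subset q.1.
Proof.
move=> pA ne [q0 q0B e0].
have HB : (p.2, set0) \in B by rewrite -e0; apply: (ps_pole_mem hB) => //; rewrite e0.
have [q qB] := sps_le_SP1 hle pA.
move/sp_leP => [e|/subUset_split [s1 s2]|/subUset_split [s1 s2]|[pr e _]].
- by subst q; exists p => //; split.
- exfalso; have e4 := ps_block_subset_inj hB HB qB s2; rewrite -e4 /= in s1.
  exact: nonempty_disjoint_subsetF (ps_block_neq0 hA pA) (ps_disjoint hA pA) s1.
- have ne2 : q.2 != set0.
    apply: contraNN ne => /eqP e; by rewrite -subset0 -e.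
  have HQ : (q.2, set0) \in B by apply: (ps_pole_mem hB).
  exfalso; have e4 := ps_block_subset_inj hB HB HQ s2; case: e4 => e4; rewrite -e4 in s1.
  exact: nonempty_disjoint_subsetF (ps_block_neq0 hA pA) (ps_disjoint hA pA) s1.
- by exists q => //; split => //; apply: proper_sub.
Qed.

Lemma le_star_dropped p : p \in A -> p.2 != set0 -> (forall q, q \in B -> q.2 != p.2) ->
  exists2 q, q \in B & p.1 :|: p.2 \subset q.1.
Proof.
move=> pA ne nq; have [q qB] := sps_le_SP1 hle pA.
move/sp_leP => [e|s|s|[pr e _]].
- by subst q; move: (nq _ qB); rewrite eqxx.
- by exists q.
- have ne2 : q.2 != set0.
    apply: contraNN ne => /eqP e; rewrite -subset0 -e; exact: subset_trans (subsetUr _ _) s.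
  by exists (q.2, set0) => //; apply: (ps_pole_mem hB).
- by move: (nq _ qB); rewrite e eqxx.
Qed.

End Comparable.

Lemma sps_le_trans A B C : polestar_spec A -> polestar_spec B -> polestar_spec C ->
  sps_le A B -> sps_le B C -> sps_le A C.
Proof.
move=> hA hB hC hAB hBC; apply: sps_leI.
  move=> p pA; have [q qB l1] := sps_le_SP1 hAB pA; have [r rC l2] := sps_le_SP1 hBC qB.
  by exists r => //; apply: sp_le_trans l2.
move=> r rC ne [p0 p0A e0].
case: (classic (exists2 q, q \in B & q.2 = r.2)) => [[q1 q1B e1]|nq].
  have [q qB [e2 l2]] := sps_le_SP2 hBC rC ne (ex_intro2 _ _ q1 q1B e1).
  have ne2 : q.2 != set0 by rewrite e2.
  have [p pA [e3 l3]] := sps_le_SP2 hAB qB ne2 (ex_intro2 _ _ p0 p0A (etrans e0 (esym e2))).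
  by exists p => //; split; [rewrite e3 | apply: sp_le_trans l2].
(* r.2 = p0.2 is not a pole of B, so some block of B contains p0.1 :|: p0.2; in C that
   block lies inside the pole block r.2, forcing p0.1 \subset p0.2. *)
exfalso.
have HC : (r.2, set0) \in C by apply: (ps_pole_mem hC).
have ne0 : p0.2 != set0 by rewrite e0.
have nq' : forall q, q \in B -> q.2 != p0.2.
  by move=> q qB; apply/eqP => e; apply: nq; exists q => //; rewrite e.
have [q qB s] := le_star_dropped hB hAB p0A ne0 nq'.
have [r' r'C s'] := le_block_sub hB hC hBC qB.
have s2 : r.2 \subset r'.1.
  by rewrite -e0; exact: subset_trans (subset_trans (subsetUr _ _) s) s'.
have e4 := ps_block_subset_inj hC HC r'C s2.
have s3 : p0.1 \subset r.2.
  have -> : r.2 = r'.1 by rewrite -e4.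
  exact: subset_trans (subset_trans (subsetUl _ _) s) s'.
rewrite -e0 in s3; exact: nonempty_disjoint_subsetF (ps_block_neq0 hA p0A) (ps_disjoint hA p0A) s3.
Qed.

Lemma nonpoles_sub A : nonpoles A \subset A.
Proof. by apply/subsetP => p; rewrite inE => /andP []. Qed.

Lemma card_ps_le A : polestar_spec A -> #|A| <= #|T|.
Proof.
move=> hA.
have inj : {in A &, injective (fun p : setpair T => p.1)}.
  by move=> p q pA qA; apply: (ps_block_inj hA).
have e1 : #|Pof A| = #|A| by rewrite /Pof card_in_imset.
have hpart : partition (Pof A) [set: T].
  by move/polestarP: hA => /and4P [_ h _ _].
rewrite -e1 -cardsT (card_partition hpart) -sum1_card.
apply: leq_sum => S /imsetP [p pA ->]; rewrite card_gt0; exact: (ps_block_neq0 hA pA).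
Qed.

Lemma hfunE A : polestar_spec A -> hfun A = #|T| - #|nonpoles A|.
Proof.
move=> hA.
have inj : {in A &, injective (fun p : setpair T => p.1)}.
  by move=> p q pA qA; apply: (ps_block_inj hA).
have inj' : {in A :\: nonpoles A &, injective (fun p : setpair T => p.1)}.
  by move=> p q /setDP [pA _] /setDP [qA _]; apply: (ps_block_inj hA).
have e1 : #|Pof A| = #|A| by rewrite /Pof card_in_imset.
have e2 : Hof A = [set p.1 | p in A :\: nonpoles A].
  apply/setP => X; apply/imsetP/imsetP.
  - case=> p; rewrite inE => /andP [pA ne] ->.
    exists (p.2, set0) => //; rewrite !inE (ps_pole_mem hA) // andbT negbK /=.
    by apply/is_poleP; exists p.
  - case=> p /setDP [pA]; rewrite inE pA /= negbK => /is_poleP [q qA [ne e]] ->.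
    by exists q => //; rewrite inE qA.
have e3 : #|Hof A| = #|A :\: nonpoles A| by rewrite e2 card_in_imset.
have e4 := cardsID (nonpoles A) A.
rewrite (setIidPr (nonpoles_sub A)) in e4.
have := card_ps_le hA.
rewrite /hfun e1 e3; lia.
Qed.

Lemma nonpoles_le_witness A B q : polestar_spec A -> polestar_spec B -> sps_le A B -> q \in nonpoles B ->
  exists2 p, p \in nonpoles A & p.1 \subset q.1.
Proof.
move=> hA hB hle; rewrite inE => /andP [qB npq].
have [x xq] := set0Pn _ (ps_block_neq0 hB qB).
have [r rA xr] := ps_cover hA x.
have [q' q'B s'] := le_block_sub hA hB hle rA.
have e : q' = q by apply: (ps_block_uniq hB q'B qB (subsetP s' _ xr) xq).
subst q'.
case: (boolP (is_pole A r.1)) => pr; last by exists r => //; rewrite inE rA pr.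
case/is_poleP: pr => [s sA [ne e]].
case: (classic (exists2 q0, q0 \in B & q0.2 = s.2)) => [[q0 q0B e0]|nq].
  exfalso; have HB : (q0.2, set0) \in B by apply: (ps_pole_mem hB) => //; rewrite e0.
  have e1 : (q0.2, set0) = q by apply: (ps_block_uniq hB HB qB _ xq); rewrite /= e0 e.
  move/negP: npq; apply; apply/is_poleP; exists q0 => //; split; first by rewrite e0.
  by rewrite -e1.
have nq' : forall q1, q1 \in B -> q1.2 != s.2.
  by move=> q1 q1B; apply/eqP => e1; apply: nq; exists q1.
have [q'' q''B s''] := le_star_dropped hB hle sA ne nq'.
have xs2 : x \in s.2 by rewrite e.
have e2 : q'' = q by apply: (ps_block_uniq hB q''B qB _ xq); apply: (subsetP s''); rewrite inE xs2 orbT.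
subst q''; exists s; first by rewrite inE sA (star_nonpole hA sA ne).
exact: subset_trans (subsetUl _ _) s''.
Qed.

Lemma card_nonpoles_le A B : polestar_spec A -> polestar_spec B -> sps_le A B ->
  #|nonpoles B| <= #|nonpoles A|.
Proof.
move=> hA hB hle.
pose g q := odflt q [pick p in nonpoles A | p.1 \subset q.1].
have gP : forall q, q \in nonpoles B -> g q \in nonpoles A /\ (g q).1 \subset q.1.
  move=> q qN; rewrite /g; case: pickP => [p /andP [pN ps]|none] //=.
  by exfalso; have [p pN ps] := nonpoles_le_witness hA hB hle qN; move: (none p); rewrite pN ps.
have inj : {in nonpoles B &, injective g}.
  move=> q q' qN q'N e.
  have [gN gs] := gP _ qN; have [_ gs'] := gP _ q'N.
  have [x xg] := set0Pn _ (ps_block_neq0 hA (subsetP (nonpoles_sub A) _ gN)).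
  move: qN q'N; rewrite !inE => /andP [qB _] /andP [q'B _].
  apply: (ps_block_uniq hB qB q'B (subsetP gs _ xg)); rewrite -e in gs'; exact: (subsetP gs' _ xg).
rewrite -(card_in_imset inj); apply: subset_leq_card; apply/subsetP => y /imsetP [q qN ->].
by case: (gP _ qN).
Qed.

Lemma pole_pair_neq_nonpole A p X : is_pole A X -> ~~ is_pole A p.1 -> (X, set0) != p.
Proof. by move=> pX npp; apply/eqP => e; move: npp; rewrite -e /= pX. Qed.

Definition nonpole_step A B C :=
  [/\ polestar_spec C, sps_le A C, sps_le C B & #|nonpoles C| + 1 = #|nonpoles A|].

Section Merge.
Variable A : sps T.
Hypothesis hA : polestar_spec A.
Variables p1 p2 : setpair T.
Hypotheses (p1A : p1 \in A) (p2A : p2 \in A) (p12 : p1 != p2) (e1 : p1.2 = set0)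
  (np1 : ~~ is_pole A p1.1) (np2 : ~~ is_pole A p2.1).

Definition merge_pair := (p1.1 :|: p2.1, p2.2).
Definition merge_sys := merge_pair |: (A :\: [set p1; p2]).

Lemma merge_sysP r : r \in merge_sys -> r = merge_pair \/ [/\ r \in A, r != p1 & r != p2].
Proof.
rewrite !inE => /orP [/eqP -> | /andP [] ]; first by left.
by rewrite negb_or => /andP [a b] c; right.
Qed.

Lemma merge_sys_old r : r \in A -> r != p1 -> r != p2 -> r \in merge_sys.
Proof. by move=> rA a b; rewrite !inE negb_or rA a b orbT. Qed.

Lemma merge_pair_mem : merge_pair \in merge_sys.
Proof. by rewrite !inE eqxx. Qed.

Lemma merge_blocks_disjoint : [disjoint p1.1 & p2.1].
Proof. exact: (ps_blocks_disjoint hA p1A p2A p12). Qed.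

Lemma merge_block_new q : q \in A -> q.1 != merge_pair.1.
Proof.
move=> qA; apply/eqP => e.
have [x xp] := set0Pn _ (ps_block_neq0 hA p1A).
have xq : x \in q.1 by rewrite e /= inE xp.
have s : p2.1 \subset p1.1 by rewrite -(ps_block_uniq hA qA p1A xq xp) e subsetUr.
by apply: (nonempty_disjoint_subsetF (ps_block_neq0 hA p2A) _ s); rewrite disjoint_sym merge_blocks_disjoint.
Qed.

Lemma merge_pair_notin : merge_pair \notin A.
Proof. by apply/negP => /merge_block_new; rewrite eqxx. Qed.

Lemma merge_pair_nonpole : ~~ is_pole A merge_pair.1.
Proof. by apply/negP => /(pole_mem hA) /merge_block_new; rewrite eqxx. Qed.

Lemma merge_pair_neq r : r \in A -> r != merge_pair.
Proof. by move=> rA; apply: contraNN merge_pair_notin => /eqP <-. Qed.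

Lemma merge_sys_partner r : r \in merge_sys -> r.2 != set0 ->
  exists q, [/\ q \in merge_sys, q != r, q.2 = r.2 &
    forall r', r' \in merge_sys -> r' != r -> r'.2 = r.2 -> r' = q].
Proof.
move=> rC ne.
case: (eqVneq r.2 p2.2) => [e2|n2].
- have ne2 : p2.2 != set0 by rewrite -e2.
  have [m [mA mp2 m2 mu]] := ps_partner hA p2A ne2.
  have mp1 : m != p1 by apply/eqP => e; move: ne2; rewrite -m2 e e1 eqxx.
  have mC : m \in merge_sys by apply: merge_sys_old.
  case/merge_sysP: rC => [er|[rA a b]].
  + exists m; split => //; first by rewrite er; apply: merge_pair_neq.
      by rewrite m2 er.
    move=> r' /merge_sysP [->|[r'A a' b']]; first by rewrite er eqxx.
    by move=> _ e'; apply: mu => //; rewrite e' er.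
  + have erm : r = m by apply: mu.
    exists merge_pair; split => //; first exact: merge_pair_mem.
      by rewrite eq_sym; apply: merge_pair_neq.
    move=> r' /merge_sysP [->//|[r'A a' b']] nr e'.
    by exfalso; move: nr; rewrite erm (mu _ r'A b') ?eqxx // e' e2.
- case/merge_sysP: rC => [er|[rA a b]]; first by move: n2; rewrite er eqxx.
  have [m [mA mr m2 mu]] := ps_partner hA rA ne.
  have mp1 : m != p1 by apply/eqP => e; move: ne; rewrite -m2 e e1 eqxx.
  have mp2 : m != p2 by apply/eqP => e; move: n2; rewrite -m2 e eqxx.
  exists m; split => //; first exact: merge_sys_old.
  move=> r' /merge_sysP [->|[r'A a' b']]; first by move=> _ e'; move: n2; rewrite -e' eqxx.
  by move=> nr e'; apply: mu.
Qed.

Lemma merge_sys_spec : polestar_spec merge_sys.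
Proof.
constructor.
- move=> r /merge_sysP [->|[rA _ _]]; last exact: (ps_block_neq0 hA rA).
  have [x xp] := set0Pn _ (ps_block_neq0 hA p1A).
  by apply/set0Pn; exists x; rewrite /= inE xp.
- move=> r /merge_sysP [->|[rA _ _]]; last exact: (ps_disjoint hA rA).
  rewrite /merge_pair /=; apply: disjointsU; last exact: (ps_disjoint hA p2A).
  case: (eqVneq p2.2 set0) => [->|ne]; first exact: disjoints0.
  have HA := ps_pole_mem hA p2A ne.
  have nP : (p2.2, set0) != p1 by apply: pole_pair_neq_nonpole np1; apply/is_poleP; exists p2.
  rewrite disjoint_sym; exact: (ps_blocks_disjoint hA HA p1A nP).
- move=> x; have [r rA xr] := ps_cover hA x.
  case: (eqVneq r p1) => [e|n1]; first by exists merge_pair; [exact: merge_pair_mem | rewrite /= inE -e xr].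
  case: (eqVneq r p2) => [e|n2]; first by exists merge_pair; [exact: merge_pair_mem | rewrite /= inE -e xr orbT].
  by exists r => //; apply: merge_sys_old.
- move=> r r' x /merge_sysP [->|[rA a b]] /merge_sysP [->|[r'A a' b']] //=.
  + rewrite inE => /orP [xp|xp] xr'; exfalso.
      by move: a'; rewrite (ps_block_uniq hA p1A r'A xp xr') eqxx.
    by move: b'; rewrite (ps_block_uniq hA p2A r'A xp xr') eqxx.
  + move=> xr; rewrite inE => /orP [xp|xp]; exfalso.
      by move: a; rewrite (ps_block_uniq hA rA p1A xr xp) eqxx.
    by move: b; rewrite (ps_block_uniq hA rA p2A xr xp) eqxx.
  + exact: (ps_block_uniq hA rA r'A).
- move=> r /merge_sysP [->|[rA a b]] ne /=.
  + have HA := ps_pole_mem hA p2A ne.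
    have pl : is_pole A p2.2 by apply/is_poleP; exists p2.
    apply: merge_sys_old => //; [exact: pole_pair_neq_nonpole np1 | exact: pole_pair_neq_nonpole np2].
  + have HA := ps_pole_mem hA rA ne.
    have pl : is_pole A r.2 by apply/is_poleP; exists r.
    apply: merge_sys_old => //; [exact: pole_pair_neq_nonpole np1 | exact: pole_pair_neq_nonpole np2].
- exact: merge_sys_partner.
Qed.

Lemma sp_le_merge_pair : sp_le p2 merge_pair.
Proof.
rewrite /sp_le; apply/or4P.
case: (eqVneq p2.2 set0) => [e|ne].
  by constructor 2; rewrite e setU0 /= subsetUr.
constructor 4; rewrite /merge_pair /= eqxx ?ne !andbT.
apply: properUr; apply/negP; exact: nonempty_disjoint_subsetF (ps_block_neq0 hA p1A) merge_blocks_disjoint.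
Qed.

Lemma le_merge_sys : sps_le A merge_sys.
Proof.
apply: sps_leI.
- move=> r rA.
  case: (eqVneq r p1) => [->|n1].
    by exists merge_pair; [exact: merge_pair_mem | rewrite /sp_le e1 setU0 /= subsetUl orbT].
  case: (eqVneq r p2) => [->|n2]; first by exists merge_pair; [exact: merge_pair_mem | exact: sp_le_merge_pair].
  by exists r; [apply: merge_sys_old | apply: sp_le_refl].
- move=> q /merge_sysP [->|[qA a b]] ne _.
    by exists p2 => //; split => //; exact: sp_le_merge_pair.
  by exists q => //; split => //; exact: sp_le_refl.
Qed.

Lemma is_pole_merge_sys X : is_pole merge_sys X = is_pole A X.
Proof.
apply/is_poleP/is_poleP.
- case=> r /merge_sysP [->|[rA _ _]] [ne e]; first by exists p2.
  by exists r.
- case=> r rA [ne e].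
  case: (eqVneq r p1) => [er|n1]; first by move: ne; rewrite er e1 eqxx.
  case: (eqVneq r p2) => [er|n2]; first by exists merge_pair; [exact: merge_pair_mem | rewrite /= -er].
  by exists r => //; apply: merge_sys_old.
Qed.

Lemma card_nonpoles_merge : #|nonpoles merge_sys| + 1 = #|nonpoles A|.
Proof.
have eN : nonpoles merge_sys = merge_pair |: (nonpoles A :\: [set p1; p2]).
  apply/setP => r; rewrite !inE is_pole_merge_sys.
  case: (eqVneq r merge_pair) => [->|nr] /=; first by rewrite merge_pair_nonpole.
  by rewrite andbA andbC.
have sub : [set p1; p2] \subset nonpoles A.
  by apply/subsetP => r; rewrite !inE => /orP [/eqP -> | /eqP ->]; rewrite ?p1A ?p2A ?np1 ?np2.
have nin : merge_pair \notin nonpoles A by rewrite inE (negbTE merge_pair_notin).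
by rewrite eN; apply: card_setU1D sub nin _; rewrite cards2 p12.
Qed.

Section MergeBelow.
Variable B : sps T.
Hypotheses (hB : polestar_spec B) (hle : sps_le A B).
Variable q0 : setpair T.
Hypotheses (q0B : q0 \in B) (sq0 : merge_pair.1 \subset q0.1) (e0 : p2.2 = set0 \/ q0.2 = p2.2).

Lemma sp_le_merge_pair_bound : sp_le merge_pair q0.
Proof.
rewrite /sp_le; apply/or4P.
case: (eqVneq p2.2 set0) => [e2|ne2].
  by constructor 2; move: sq0; rewrite /merge_pair /= e2 setU0.
case: e0 => [e|e]; first by move: ne2; rewrite e eqxx.
case: (eqVneq merge_pair.1 q0.1) => [e'|ne'].
  by constructor 1; apply/eqP; apply: pair_ext => //; rewrite e.
constructor 4; rewrite properEneq ne' sq0 /merge_pair /= e eqxx.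
by [].
Qed.

Lemma merge_sys_le : sps_le merge_sys B.
Proof.
apply: sps_leI.
- move=> r /merge_sysP [->|[rA _ _]]; first by exists q0 => //; exact: sp_le_merge_pair_bound.
  exact: sps_le_SP1 hle rA.
- move=> q qB ne [r rC er].
  have ex : exists2 r0, r0 \in A & r0.2 = q.2.
    case/merge_sysP: rC => [e|[rA _ _]]; last by exists r.
    by exists p2 => //; rewrite -er e.
  have [p pA [ep lp]] := sps_le_SP2 hle qB ne ex.
  case: (eqVneq p p1) => [e|n1]; first by move: ne; rewrite -ep e e1 eqxx.
  case: (eqVneq p p2) => [e|n2]; last by exists p => //; apply: merge_sys_old.
  subst p.
  have s := sp_le_samepole_sub (ps_block_neq0 hA p2A) (ps_disjoint hA p2A) (esym ep) lp.
  have [x xp] := set0Pn _ (ps_block_neq0 hA p2A).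
  have xq0 : x \in q0.1 by apply: (subsetP sq0); rewrite /= inE xp orbT.
  have eq0 : q = q0 by apply: (ps_block_uniq hB qB q0B (subsetP s _ xp) xq0).
  subst q; exists merge_pair; [exact: merge_pair_mem | split => //; exact: sp_le_merge_pair_bound].
Qed.

Lemma merge_step : nonpole_step A B merge_sys.
Proof.
by split; [exact: merge_sys_spec | exact: le_merge_sys | exact: merge_sys_le | exact: card_nonpoles_merge].
Qed.

End MergeBelow.
End Merge.

Section Contract.
Variable A : sps T.
Hypothesis hA : polestar_spec A.
Variables p p' : setpair T.
Hypotheses (pA : p \in A) (ne : p.2 != set0) (p'A : p' \in A) (pp' : p' != p)
  (e' : p'.2 = p.2) (mu : forall r, r \in A -> r != p -> r.2 = p.2 -> r = p').

Definition contract_pair := (p.1 :|: p'.1 :|: p.2, set0 : {set T}).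
Definition contract_pole := (p.2, set0 : {set T}).
Definition contract_sys := contract_pair |: (A :\: [set p; p'; contract_pole]).

Lemma contract_pole_mem : contract_pole \in A.
Proof. exact: (ps_pole_mem hA pA ne). Qed.

Lemma same_pole_partner r : r \in A -> r.2 = p.2 -> r = p \/ r = p'.
Proof. move=> rA e; case: (eqVneq r p) => [->|n]; [by left | by right; apply: mu]. Qed.

Lemma contract_sysP r : r \in contract_sys ->
  r = contract_pair \/ [/\ r \in A, r != p, r != p' & r != contract_pole].
Proof.
rewrite !inE => /orP [/eqP -> | /andP [] ]; first by left.
by rewrite !negb_or => /andP [/andP [a b] c] d; right.
Qed.

Lemma contract_sys_old r : r \in A -> r != p -> r != p' -> r != contract_pole -> r \in contract_sys.
Proof. by move=> rA a b c; rewrite !inE !negb_or rA a b c orbT. Qed.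

Lemma contract_pair_mem : contract_pair \in contract_sys.
Proof. by rewrite !inE eqxx. Qed.

Lemma contract_pair_notin : contract_pair \notin A.
Proof.
apply/negP => nA.
have [x xp] := set0Pn _ (ps_block_neq0 hA pA).
have xn : x \in contract_pair.1 by rewrite /= !inE xp.
have e := ps_block_uniq hA nA pA xn xp.
by move: ne; rewrite -e eqxx.
Qed.

Lemma other_pole_neq r : r \in A -> r != p -> r != p' -> r.2 != p.2.
Proof. by move=> rA a b; apply/eqP => e; case: (same_pole_partner rA e) => ee; [move: a | move: b]; rewrite ee eqxx. Qed.

Lemma contract_sys_spec : polestar_spec contract_sys.
Proof.
constructor.
- move=> r /contract_sysP [->|[rA _ _ _]]; last exact: (ps_block_neq0 hA rA).
  have [x xp] := set0Pn _ (ps_block_neq0 hA pA).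
  by apply/set0Pn; exists x; rewrite /= !inE xp.
- move=> r /contract_sysP [->|[rA _ _ _]]; last exact: (ps_disjoint hA rA).
  exact: disjoints0.
- move=> x; have [r rA xr] := ps_cover hA x.
  case: (eqVneq r p) => [e|n1]; first by exists contract_pair; [exact: contract_pair_mem | rewrite /= !inE -e xr].
  case: (eqVneq r p') => [e|n2]; first by exists contract_pair; [exact: contract_pair_mem | rewrite /= !inE -e xr orbT].
  case: (eqVneq r contract_pole) => [e|n3].
    by exists contract_pair; [exact: contract_pair_mem | rewrite /= !inE -[p.2]/(contract_pole.1) -e xr !orbT].
  by exists r => //; apply: contract_sys_old.
- have key : forall r x, r \in A -> r != p -> r != p' -> r != contract_pole ->
      x \in contract_pair.1 -> x \in r.1 -> False.
    move=> r x rA a b c; rewrite /= !inE => /orP [/orP [xp|xp]|xp] xr.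
    + by move: a; rewrite (ps_block_uniq hA rA pA xr xp) eqxx.
    + by move: b; rewrite (ps_block_uniq hA rA p'A xr xp) eqxx.
    + by move: c; rewrite (ps_block_uniq hA rA contract_pole_mem xr xp) eqxx.
  move=> r r' x /contract_sysP [->|[rA a b c]] /contract_sysP [->|[r'A a' b' c']] //=.
  + by move=> xn xr'; exfalso; exact: (key r' x).
  + by move=> xr xn; exfalso; exact: (key r x).
  + exact: (ps_block_uniq hA rA r'A).
- move=> r /contract_sysP [->|[rA a b c]] ne2 /=; first by move: ne2; rewrite eqxx.
  have HA := ps_pole_mem hA rA ne2.
  have n3 := other_pole_neq rA a b.
  apply: contract_sys_old => //; apply/eqP => e.
  + by move: e => /(f_equal snd) /= e; move: ne; rewrite -e eqxx.
  + by move: e => /(f_equal snd) /= e; move: ne; rewrite -e' -e eqxx.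
  + by move: e => /(f_equal fst) /= e; move: n3; rewrite e eqxx.
- move=> r /contract_sysP [->|[rA a b c]] ne2; first by move: ne2; rewrite eqxx.
  have n3 := other_pole_neq rA a b.
  have [m [mA mr m2 mu2]] := ps_partner hA rA ne2.
  have m1 : m != p by apply/eqP => e; move: n3; rewrite -m2 e eqxx.
  have mp' : m != p' by apply/eqP => e; move: n3; rewrite -m2 e e' eqxx.
  have m3 : m != contract_pole by apply/eqP => e; move: ne2; rewrite -m2 e eqxx.
  exists m; split => //; first exact: contract_sys_old.
  move=> r' /contract_sysP [->|[r'A a' b' c']] nr e2; first by move: ne2; rewrite -e2 eqxx.
  exact: mu2.
Qed.

Lemma sp_le_contract_pair r :
  r.1 \subset contract_pair.1 -> r.2 \subset contract_pair.1 -> sp_le r contract_pair.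
Proof. by move=> sX sY; rewrite /sp_le; apply/or4P; constructor 2; rewrite subUset sX sY. Qed.

Lemma le_contract_sys : sps_le A contract_sys.
Proof.
apply: sps_leI.
- move=> r rA.
  case: (eqVneq r p) => [->|n1].
    exists contract_pair; first exact: contract_pair_mem.
    by apply: sp_le_contract_pair; apply/subsetP => x xp; rewrite /= !inE xp ?orbT.
  case: (eqVneq r p') => [->|n2].
    exists contract_pair; first exact: contract_pair_mem.
    by apply: sp_le_contract_pair; apply/subsetP => x; rewrite /= ?e' => xp; rewrite !inE xp ?orbT.
  case: (eqVneq r contract_pole) => [->|n3].
    exists contract_pair; first exact: contract_pair_mem.
    by apply: sp_le_contract_pair; apply/subsetP => x; rewrite /= ?inE => xp; rewrite ?xp ?orbT.
  by exists r; [apply: contract_sys_old | apply: sp_le_refl].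
- move=> q /contract_sysP [->|[qA a b c]] ne2 _; first by move: ne2; rewrite eqxx.
  by exists q => //; split => //; exact: sp_le_refl.
Qed.

Lemma is_pole_contract_sys X : is_pole contract_sys X = is_pole A X && (X != p.2).
Proof.
apply/is_poleP/andP.
- case=> r /contract_sysP [->|[rA a b c]] [ne2 e2]; first by move: ne2; rewrite eqxx.
  split; first by apply/is_poleP; exists r.
  by rewrite -e2; apply: other_pole_neq.
- case=> /is_poleP [r rA [ne2 e2]] nX.
  have a : r != p by apply/eqP => e; move: nX; rewrite -e2 e eqxx.
  have b : r != p' by apply/eqP => e; move: nX; rewrite -e2 e e' eqxx.
  have c : r != contract_pole by apply/eqP => e; move: ne2; rewrite e eqxx.
  by exists r => //; apply: contract_sys_old.
Qed.

Lemma card_nonpoles_contract : #|nonpoles contract_sys| + 1 = #|nonpoles A|.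
Proof.
have hp : is_pole A p.2 by apply/is_poleP; exists p.
have eN : nonpoles contract_sys = contract_pair |: (nonpoles A :\: [set p; p']).
  apply/setP => r; rewrite [in LHS]inE is_pole_contract_sys.
  case: (eqVneq r contract_pair) => [->|nr].
    rewrite contract_pair_mem !inE eqxx /=; apply/negP => /andP [/(pole_mem hA) h _].
    have [x xp] := set0Pn _ (ps_block_neq0 hA pA).
    have xn : x \in contract_pair.1 by rewrite /= !inE xp.
    have e := ps_block_uniq hA h pA xn xp.
    by move: ne; rewrite -e eqxx.
  rewrite !inE (negbTE nr) /=.
  case: (eqVneq r contract_pole) => [->|n3] /=; first by rewrite hp !orbT /= !andbF.
  case: (boolP (r \in A)) => rA /=; last by rewrite !andbF.
  case: (eqVneq r p) => [->|n1] //=.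
  have r1 : r.1 != p.2.
    by apply/eqP => e; move: n3; rewrite (ps_block_inj hA rA contract_pole_mem e) eqxx.
  by rewrite r1 !andbT orbF.
have pN : p \in nonpoles A by rewrite inE pA (star_nonpole hA pA ne).
have p'N : p' \in nonpoles A by rewrite inE p'A (star_nonpole hA p'A) // e'.
have sub : [set p; p'] \subset nonpoles A.
  by apply/subsetP => r; rewrite !inE => /orP [/eqP -> | /eqP ->]; [move: pN | move: p'N]; rewrite inE.
have nin : contract_pair \notin nonpoles A by rewrite inE (negbTE contract_pair_notin).
by rewrite eN; apply: card_setU1D sub nin _; rewrite cards2 eq_sym pp'.
Qed.

Section ContractBelow.
Variable B : sps T.
Hypotheses (hB : polestar_spec B) (hle : sps_le A B) (nq : forall q, q \in B -> q.2 != p.2).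

Lemma contract_sys_le : sps_le contract_sys B.
Proof.
apply: sps_leI.
- move=> r /contract_sysP [->|[rA _ _ _]]; last exact: sps_le_SP1 hle rA.
  have [q1 q1B s1] := le_star_dropped hB hle pA ne nq.
  have nq' : forall q, q \in B -> q.2 != p'.2 by move=> q qB; rewrite e'; apply: nq.
  have ne' : p'.2 != set0 by rewrite e'.
  have [q2 q2B s2] := le_star_dropped hB hle p'A ne' nq'.
  have [x xp] := set0Pn _ ne.
  have x1 : x \in q1.1 by apply: (subsetP s1); rewrite inE xp orbT.
  have x2 : x \in q2.1 by apply: (subsetP s2); rewrite inE e' xp orbT.
  have e12 := ps_block_uniq hB q2B q1B x2 x1; subst q2.
  exists q1 => //; rewrite /sp_le; apply/or4P; constructor 2.
  rewrite /= setU0 !subUset; move: s1 s2; rewrite !subUset => /andP [-> ->] /andP [-> _] //.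
- move=> q qB ne2 [r rC er].
  case/contract_sysP: rC => [e|[rA _ _ _]]; first by move: ne2; rewrite -er e eqxx.
  have [p0 p0A [ep lp]] := sps_le_SP2 hle qB ne2 (ex_intro2 _ _ r rA er).
  exists p0 => //; apply: contract_sys_old => //; apply/eqP => e.
  + by move: (nq qB); rewrite -ep e eqxx.
  + by move: (nq qB); rewrite -ep e e' eqxx.
  + by move: ne2; rewrite -ep e eqxx.
Qed.

Lemma contract_step : nonpole_step A B contract_sys.
Proof.
by split; [exact: contract_sys_spec | exact: le_contract_sys | exact: contract_sys_le | exact: card_nonpoles_contract].
Qed.

End ContractBelow.
End Contract.


Section Attach.
Variables A B : sps T.
Hypotheses (hA : polestar_spec A) (hB : polestar_spec B) (hle : sps_le A B).
Variables q1 q2 : setpair T.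
Hypotheses (q1B : q1 \in B) (q2B : q2 \in B) (ne1 : q1.2 != set0) (q21 : q2 != q1)
  (e21 : q2.2 = q1.2) (mu : forall r, r \in B -> r != q1 -> r.2 = q1.2 -> r = q2).
Hypotheses (f1A : (q1.1, set0) \in A) (f2A : (q2.1, set0) \in A) (hbA : (q1.2, set0) \in A)
  (np1 : ~~ is_pole A q1.1) (np2 : ~~ is_pole A q2.1) (npole : ~~ is_pole A q1.2).

Definition attach_free1 := (q1.1, set0 : {set T}).
Definition attach_free2 := (q2.1, set0 : {set T}).
Definition attach_pole := (q1.2, set0 : {set T}).
Definition attach_sys := q1 |: (q2 |: (A :\: [set attach_free1; attach_free2])).

Lemma attach_sysP r : r \in attach_sys ->
  [\/ r = q1, r = q2 | [/\ r \in A, r != attach_free1 & r != attach_free2]].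
Proof.
rewrite !inE => /orP [/eqP -> | /orP [/eqP -> | /andP []]]; [by constructor 1 | by constructor 2 |].
by rewrite negb_or => /andP [a b] c; constructor 3.
Qed.

Lemma attach_sys_old r : r \in A -> r != attach_free1 -> r != attach_free2 -> r \in attach_sys.
Proof. by move=> rA a b; rewrite !inE negb_or rA a b !orbT. Qed.

Lemma attach_sys_q1 : q1 \in attach_sys.
Proof. by rewrite !inE eqxx. Qed.
Lemma attach_sys_q2 : q2 \in attach_sys.
Proof. by rewrite !inE eqxx orbT. Qed.

Lemma q2_pole_neq0 : q2.2 != set0.
Proof. by rewrite e21. Qed.

Lemma q1_notin : q1 \notin A.
Proof.
apply/negP => h; have e := ps_block_inj hA h f1A erefl.
by move: ne1; rewrite e eqxx.
Qed.

Lemma q2_notin : q2 \notin A.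
Proof.
apply/negP => h; have e := ps_block_inj hA h f2A erefl.
by move: q2_pole_neq0; rewrite e eqxx.
Qed.

Lemma attach_other_pole_neq r : r \in A -> r.2 != set0 -> r.2 != q1.2.
Proof.
by move=> rA ne; apply/eqP => e; move: npole; rewrite -e; apply/negP/negPn/is_poleP; exists r.
Qed.

Lemma attach_sys_partner r : r \in attach_sys -> r.2 != set0 ->
  exists q, [/\ q \in attach_sys, q != r, q.2 = r.2 &
    forall r', r' \in attach_sys -> r' != r -> r'.2 = r.2 -> r' = q].
Proof.
move=> /attach_sysP [->|->|[rA a b]] ne.
- exists q2; split => //; first exact: attach_sys_q2.
  move=> r' /attach_sysP [->|->|[r'A a' b']] nr e'; [by move: nr; rewrite eqxx | by [] |].
  by exfalso; move: (attach_other_pole_neq r'A); rewrite e' ne1 eqxx => /(_ isT).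
- exists q1; split => //; [exact: attach_sys_q1 | by rewrite eq_sym | ].
  move=> r' /attach_sysP [->|->|[r'A a' b']] nr e'; [by [] | by move: nr; rewrite eqxx |].
  by exfalso; move: (attach_other_pole_neq r'A); rewrite e' e21 ne1 eqxx => /(_ isT).
- have [m [mA mr m2 mu2]] := ps_partner hA rA ne.
  have mf1 : m != attach_free1 by apply/eqP => e; move: ne; rewrite -m2 e eqxx.
  have mf2 : m != attach_free2 by apply/eqP => e; move: ne; rewrite -m2 e eqxx.
  exists m; split => //; first exact: attach_sys_old.
  have n1 := attach_other_pole_neq rA ne.
  move=> r' /attach_sysP [->|->|[r'A a' b']] nr e'; first by move: n1; rewrite -e' eqxx.
    by move: n1; rewrite -e' e21 eqxx.
  exact: mu2.
Qed.

Lemma attach_sys_spec : polestar_spec attach_sys.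
Proof.
constructor.
- move=> r /attach_sysP [->|->|[rA _ _]]; last exact: (ps_block_neq0 hA rA).
    exact: (ps_block_neq0 hB q1B).
  exact: (ps_block_neq0 hB q2B).
- move=> r /attach_sysP [->|->|[rA _ _]]; last exact: (ps_disjoint hA rA).
    exact: (ps_disjoint hB q1B).
  exact: (ps_disjoint hB q2B).
- move=> x; have [r rA xr] := ps_cover hA x.
  case: (eqVneq r attach_free1) => [e|n1]; first by exists q1; [exact: attach_sys_q1 | move: xr; rewrite e].
  case: (eqVneq r attach_free2) => [e|n2]; first by exists q2; [exact: attach_sys_q2 | move: xr; rewrite e].
  by exists r => //; apply: attach_sys_old.
- have key r x q : (q.1, set0) \in A -> r \in A -> r != (q.1, set0) -> x \in q.1 -> x \in r.1 -> False.
    by move=> fA rA nr xq xr; move: nr; rewrite (ps_block_uniq hA rA fA xr xq) eqxx.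
  move=> r r' x /attach_sysP [->|->|[rA a b]] /attach_sysP [->|->|[r'A a' b']] xr xr';
    first [ exact: (ps_block_uniq hB _ _ xr xr') | exact: (ps_block_uniq hA rA r'A xr xr')
          | by case: (key r' x q1) | by case: (key r' x q2)
          | by case: (key r x q1) | by case: (key r x q2) ].
- have hb1 : attach_pole != attach_free1.
    by apply/eqP => /(f_equal fst) /= e; move: (star_block_neq_pole hB q1B ne1); rewrite e eqxx.
  have hb2 : attach_pole != attach_free2.
    by apply/eqP => /(f_equal fst) /= e; move: (star_block_neq_pole hB q2B q2_pole_neq0); rewrite e21 e eqxx.
  move=> r /attach_sysP [->|->|[rA a b]] ne /=.
  + exact: attach_sys_old.
  + by rewrite e21; exact: attach_sys_old.
  + have HA := ps_pole_mem hA rA ne.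
    have pl : is_pole A r.2 by apply/is_poleP; exists r.
    by apply: attach_sys_old => //;
      [exact: (pole_pair_neq_nonpole (p:=attach_free1) pl np1)
      | exact: (pole_pair_neq_nonpole (p:=attach_free2) pl np2)].
- exact: attach_sys_partner.
Qed.

Lemma le_attach_sys : sps_le A attach_sys.
Proof.
apply: sps_leI.
- move=> r rA.
  have sp : forall q, sp_le (q.1, set0) q.
    by move=> q; rewrite /sp_le; apply/or4P; constructor 2; rewrite /= setU0.
  case: (eqVneq r attach_free1) => [->|n1]; first by exists q1; [exact: attach_sys_q1 | exact: sp].
  case: (eqVneq r attach_free2) => [->|n2]; first by exists q2; [exact: attach_sys_q2 | exact: sp].
  by exists r; [apply: attach_sys_old | apply: sp_le_refl].
- move=> q /attach_sysP [->|->|[qA a b]] ne [p pA ep].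
  + by exfalso; move: (npole); rewrite -ep; apply/negP/negPn/is_poleP; exists p => //; rewrite ep.
  + by exfalso; move: (npole); rewrite -e21 -ep; apply/negP/negPn/is_poleP; exists p => //; rewrite ep.
  + by exists q => //; split => //; exact: sp_le_refl.
Qed.

Lemma attach_sys_le : sps_le attach_sys B.
Proof.
apply: sps_leI.
- move=> r /attach_sysP [->|->|[rA _ _]]; [by exists q1 => //; apply: sp_le_refl | by exists q2 => //; apply: sp_le_refl |].
  exact: sps_le_SP1 hle rA.
- move=> q qB ne [r rC er].
  case: (eqVneq q.2 q1.2) => [e|n].
    case: (eqVneq q q1) => [->|nq1]; first by exists q1; [exact: attach_sys_q1 | split => //; exact: sp_le_refl].
    have -> := mu qB nq1 e.
    by exists q2; [exact: attach_sys_q2 | split => //; exact: sp_le_refl].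
  case/attach_sysP: rC => [er1|er2|[rA _ _]].
  + by move: n; rewrite -er er1 eqxx.
  + by move: n; rewrite -er er2 e21 eqxx.
  have [p0 p0A [ep lp]] := sps_le_SP2 hle qB ne (ex_intro2 _ _ r rA er).
  exists p0 => //; apply: attach_sys_old => //; apply/eqP => e; move: ne; rewrite -ep e eqxx //.
Qed.

Lemma is_pole_attach_sys X : is_pole attach_sys X = is_pole A X || (X == q1.2).
Proof.
apply/is_poleP/orP.
- case=> r /attach_sysP [->|->|[rA a b]] [ne e]; [by right; rewrite e | by right; rewrite -e e21 |].
  by left; apply/is_poleP; exists r.
- case=> [/is_poleP [r rA [ne e]]|/eqP ->]; last by exists q1; [exact: attach_sys_q1 | split].
  have n1 : r != attach_free1 by apply/eqP => e'; move: ne; rewrite e' eqxx.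
  have n2 : r != attach_free2 by apply/eqP => e'; move: ne; rewrite e' eqxx.
  by exists r => //; apply: attach_sys_old.
Qed.

Lemma card_nonpoles_attach : #|nonpoles attach_sys| + 1 = #|nonpoles A|.
Proof.
have q12 : q1.1 != q1.2 := star_block_neq_pole hB q1B ne1.
have q22 : q2.1 != q1.2 by rewrite -e21; exact: (star_block_neq_pole hB q2B q2_pole_neq0).
have eN : nonpoles attach_sys =
    q1 |: (q2 |: (nonpoles A :\: [set attach_free1; attach_free2; attach_pole])).
  apply/setP => r; rewrite [in LHS]inE is_pole_attach_sys.
  case: (eqVneq r q1) => [->|nr1].
    by rewrite attach_sys_q1 (negbTE np1) (negbTE q12) !inE eqxx.
  case: (eqVneq r q2) => [->|nr2].
    by rewrite attach_sys_q2 (negbTE np2) (negbTE q22) !inE eqxx orbT.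
  rewrite !inE (negbTE nr1) (negbTE nr2) /= !negb_or.
  case: (boolP (r \in A)) => rA /=; last by rewrite !andbF.
  case: (eqVneq r attach_free1) => [->|n1] //=.
  case: (eqVneq r attach_free2) => [->|n2] //=.
  have -> : (r.1 == q1.2) = (r == attach_pole).
    apply/eqP/eqP => [e|->//]; exact: (ps_block_inj hA rA hbA e).
  by rewrite andbC.
have f1N : attach_free1 \in nonpoles A by rewrite inE f1A np1.
have f2N : attach_free2 \in nonpoles A by rewrite inE f2A np2.
have hbN : attach_pole \in nonpoles A by rewrite inE hbA npole.
have f12 : attach_free1 != attach_free2.
  apply/eqP => /(f_equal fst) /= e; move: q21; rewrite (ps_block_inj hB q2B q1B) ?eqxx //.
have f1h : attach_free1 != attach_pole by apply/eqP => /(f_equal fst) /= e; move: q12; rewrite e eqxx.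
have f2h : attach_free2 != attach_pole by apply/eqP => /(f_equal fst) /= e; move: q22; rewrite e eqxx.
have sub : [set attach_free1; attach_free2; attach_pole] \subset nonpoles A.
  by apply/subsetP => r; rewrite !inE => /orP [/orP [/eqP -> | /eqP ->] | /eqP ->]; [move: f1N | move: f2N | move: hbN]; rewrite inE.
have nin2 : q2 \notin nonpoles A by rewrite inE (negbTE q2_notin).
have nin1 : q1 \notin q2 |: (nonpoles A :\: [set attach_free1; attach_free2; attach_pole]).
  by rewrite !inE eq_sym (negbTE q21) (negbTE q1_notin) !andbF.
rewrite eN cardsU1 nin1 add1n addSn -addnS.
by apply: card_setU1D sub nin2 _; rewrite cards3.
Qed.

Lemma attach_step : nonpole_step A B attach_sys.
Proof.
by split; [exact: attach_sys_spec | exact: le_attach_sys | exact: attach_sys_le | exact: card_nonpoles_attach].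
Qed.

End Attach.

Section Rigid.
Variables A B : sps T.
Hypotheses (hA : polestar_spec A) (hB : polestar_spec B) (hle : sps_le A B).
Hypothesis poles_kept : forall p, p \in A -> p.2 != set0 -> exists2 q, q \in B & q.2 = p.2.
Hypothesis no_merge : forall p1 p2 q0, p1 \in A -> p2 \in A -> p1 != p2 -> p1.2 = set0 ->
  ~~ is_pole A p1.1 -> ~~ is_pole A p2.1 -> q0 \in B -> p1.1 :|: p2.1 \subset q0.1 ->
  (p2.2 = set0 \/ q0.2 = p2.2) -> False.

Lemma pole_mem_le X : is_pole A X -> (X, set0) \in B.
Proof.
case/is_poleP => r rA [ne e]; have [q qB eq] := poles_kept rA ne.
by rewrite -e -eq; apply: (ps_pole_mem hB qB); rewrite eq.
Qed.

Lemma le_block_sub_meet s q y : s \in A -> q \in B -> y \in s.1 -> y \in q.1 -> s.1 \subset q.1.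
Proof.
move=> sA qB ys yq; have [q' q'B s'] := le_block_sub hA hB hle sA.
by rewrite -(ps_block_uniq hB q'B qB (subsetP s' _ ys) yq).
Qed.

Lemma star_mem_le p : p \in A -> p.2 != set0 -> p \in B.
Proof.
move=> pA ne.
have [q qB [eq sq]] := le_star_kept hA hB hle pA ne (poles_kept pA ne).
suff sq' : q.1 \subset p.1.
  have -> : p = q by apply: pair_ext => //; apply/eqP; rewrite eqEsubset sq sq'.
  exact: qB.
apply/subsetP => y yq; have [s sA ys] := ps_cover hA y.
have ss := le_block_sub_meet sA qB ys yq.
case: (eqVneq s p) => [<-//|nsp].
case: (eqVneq s.2 set0) => [e0|ns].
- case: (boolP (is_pole A s.1)) => [ps|nps].
    have h := pole_mem_le ps.
    have e := ps_block_uniq hB h qB ys yq.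
    by move: ne; rewrite -eq -e eqxx.
  exfalso; apply: (@no_merge s p q sA pA nsp e0 nps (star_nonpole hA pA ne) qB); last by right.
  by rewrite subUset ss sq.
- exfalso.
  have [q'' q''B [e2 s2]] := le_star_kept hA hB hle sA ns (poles_kept sA ns).
  have eq'' := ps_block_uniq hB q''B qB (subsetP s2 _ ys) yq; subst q''.
  have neq : q.2 != set0 by rewrite eq.
  have [qq [qqB qqn qq2 _]] := ps_partner hB qB neq.
  have neqq : qq.2 != set0 by rewrite qq2.
  have [p0 p0A [ep0 lp0]] := sps_le_SP2 hle qqB neqq (ex_intro2 _ _ p pA (etrans (esym eq) (esym qq2))).
  have s0 := sp_le_samepole_sub (ps_block_neq0 hA p0A) (ps_disjoint hA p0A) (esym ep0) lp0.
  have [m [mA mp m2 mu]] := ps_partner hA pA ne.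
  have sm : s = m by apply: mu => //; rewrite -e2 eq.
  have sp0 : p0.1 \subset q.1.
    case: (eqVneq p0 p) => [->//|n0].
    by rewrite (mu _ p0A n0) ?ep0 ?qq2 // -sm.
  have [x xp0] := set0Pn _ (ps_block_neq0 hA p0A).
  have := ps_block_uniq hB qqB qB (subsetP s0 _ xp0) (subsetP sp0 _ xp0).
  by move/eqP; rewrite (negbTE qqn).
Qed.

Lemma block_mem_le q : q \in B -> exists2 r, r \in A & r.1 = q.1 /\ (r.2 != set0 -> r = q).
Proof.
move=> qB; have [x xq] := set0Pn _ (ps_block_neq0 hB qB).
have [r rA xr] := ps_cover hA x.
case: (eqVneq r.2 set0) => [e0|ne]; last first.
  have rB := star_mem_le rA ne; have e := ps_block_uniq hB rB qB xr xq; subst r.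
  by exists q.
exists r => //; split; last by rewrite e0 eqxx.
have sr := le_block_sub_meet rA qB xr xq.
apply/eqP; rewrite eqEsubset sr /=; apply/subsetP => y yq.
have [s sA ys] := ps_cover hA y.
have ss := le_block_sub_meet sA qB ys yq.
case: (eqVneq s r) => [<-//|nsr].
case: (boolP (is_pole A r.1)) => [pr|npr].
  have h := pole_mem_le pr; have e := ps_block_uniq hB h qB xr xq.
  by rewrite -e in yq.
exfalso.
case: (eqVneq s.2 set0) => [e1|ns].
- case: (boolP (is_pole A s.1)) => [ps|nps].
    have h := pole_mem_le ps; have e := ps_block_uniq hB h qB ys yq.
    have xs : x \in s.1 by move: sr; rewrite -e /= => /subsetP; apply.
    by move: nsr; rewrite (ps_block_uniq hA sA rA xs xr) eqxx.
  have nrs : r != s by rewrite eq_sym.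
  apply: (@no_merge r s q rA sA nrs e0 npr nps qB); first by rewrite subUset sr ss.
  by left.
- have sB := star_mem_le sA ns; have e := ps_block_uniq hB sB qB ys yq; subst s.
  have nrs : r != q by rewrite eq_sym.
  apply: (@no_merge r q q rA sA nrs e0 npr (star_nonpole hA sA ns) qB); first by rewrite subUset sr ss.
  by right.
Qed.

Lemma star_block_nonpole q : q \in B -> q.2 != set0 -> ~~ is_pole A q.1.
Proof.
move=> qB nq; apply/negP => /pole_mem_le h.
by move: nq; rewrite -(ps_block_inj hB h qB erefl) eqxx.
Qed.

Lemma attach_step_exists q1 : q1 \in B -> q1.2 != set0 -> ~~ is_pole A q1.2 ->
  exists C, nonpole_step A B C.
Proof.
move=> q1B ne1 np.
have [q2 [q2B q21 e21 mu]] := ps_partner hB q1B ne1.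
have ne2 : q2.2 != set0 by rewrite e21.
have free_mem : forall q, q \in B -> q.2 = q1.2 -> (q.1, set0) \in A.
  move=> q qB eq; have [r rA [er hr]] := block_mem_le qB.
  case: (eqVneq r.2 set0) => [e0|nr]; first by have <- : r = (q.1, set0) by apply: pair_ext.
  by case/negP: np; apply/is_poleP; exists r => //; rewrite -eq -(hr nr).
have pole_memA : (q1.2, set0) \in A.
  have [r rA [er hr]] := block_mem_le (ps_pole_mem hB q1B ne1).
  case: (eqVneq r.2 set0) => [e0|nr]; first by have <- : r = (q1.2, set0) by apply: pair_ext.
  by move: (nr); rewrite {1}(hr nr) eqxx.
exists (attach_sys A q1 q2).
by apply: attach_step; rewrite ?free_mem //; apply: star_block_nonpole.
Qed.

Lemma le_eq_of_poles : (forall q, q \in B -> q.2 != set0 -> is_pole A q.2) -> A = B.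
Proof.
move=> poles_old.
have BA : B \subset A.
  apply/subsetP => q qB; have [r rA [er hr]] := block_mem_le qB.
  case: (eqVneq r.2 set0) => [e0|nr]; last by rewrite -(hr nr).
  case: (eqVneq q.2 set0) => [eq0|nq0].
    by have <- : r = q by apply: pair_ext => //; rewrite e0 eq0.
  case/is_poleP: (poles_old _ qB nq0) => s sA [ns es].
  have sB := star_mem_le sA ns.
  case: (eqVneq q s) => [->//|nqs].
  have [m [mA ms m2 _]] := ps_partner hA sA ns.
  have mB : m \in B by apply: star_mem_le; rewrite // m2.
  have [qq [_ _ _ muq]] := ps_partner hB sB ns.
  by rewrite (muq _ qB nqs (esym es)) -(muq _ mB ms m2).
apply/eqP; rewrite eqEsubset BA andbT; apply/subsetP => p pA.
have [x xp] := set0Pn _ (ps_block_neq0 hA pA).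
have [q qB xq] := ps_cover hB x.
by rewrite (ps_block_uniq hA pA (subsetP BA _ qB) xp xq).
Qed.

End Rigid.

Lemma cover_nonpoles A B : polestar_spec A -> polestar_spec B -> sps_le A B -> A != B ->
  exists C, nonpole_step A B C.
Proof.
move=> hA hB hle neAB.
case: (classic (exists2 p, p \in A & p.2 != set0 /\ forall q, q \in B -> q.2 != p.2)) =>
  [[p pA [ne lost]]|no_lost].
  have [p' [p'A p'p e' mu]] := ps_partner hA pA ne.
  by exists (contract_sys A p p'); apply: contract_step.
have kept : forall p, p \in A -> p.2 != set0 -> exists2 q, q \in B & q.2 = p.2.
  move=> p pA ne; apply: NNPP => h; apply: no_lost; exists p => //; split => // q qB.
  by apply/eqP => e; apply: h; exists q.
case: (classic (exists p1 p2 q0, [/\ p1 \in A, p2 \in A, p1 != p2 & p1.2 = set0] /\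
    [/\ ~~ is_pole A p1.1, ~~ is_pole A p2.1, q0 \in B, p1.1 :|: p2.1 \subset q0.1
       & p2.2 = set0 \/ q0.2 = p2.2])) =>
  [[p1 [p2 [q0 [[p1A p2A p12 e1] [np1 np2 q0B sq0 e0]]]]]|mergeable].
  by exists (merge_sys A p1 p2); exact: (merge_step hA p1A p2A p12 e1 np1 np2 hB hle q0B sq0 e0).
have no_merge : forall p1 p2 q0, p1 \in A -> p2 \in A -> p1 != p2 -> p1.2 = set0 ->
    ~~ is_pole A p1.1 -> ~~ is_pole A p2.1 -> q0 \in B -> p1.1 :|: p2.1 \subset q0.1 ->
    p2.2 = set0 \/ q0.2 = p2.2 -> False.
  by move=> p1 p2 q0 *; apply: mergeable; exists p1, p2, q0.
case: (classic (exists2 q1, q1 \in B & q1.2 != set0 /\ ~~ is_pole A q1.2)) =>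
  [[q1 q1B [ne1 np]]|new_pole].
  exact: (attach_step_exists hA hB hle kept no_merge q1B ne1 np).
case/eqP: neAB; apply: (le_eq_of_poles hA hB hle kept no_merge) => q qB ne.
by apply: NNPP => np; apply: new_pole; exists q => //; split => //; apply/negP.
Qed.

Lemma card_nonpoles_leT A : polestar_spec A -> #|nonpoles A| <= #|T|.
Proof. move=> hA; apply: leq_trans (card_ps_le hA); exact: subset_leq_card (nonpoles_sub A). Qed.

Lemma hfun_le A B : polestar_spec A -> polestar_spec B -> sps_le A B -> hfun A <= hfun B.
Proof.
move=> hA hB hle; rewrite (hfunE hA) (hfunE hB).
have := card_nonpoles_le hA hB hle; have := card_nonpoles_leT hA; have := card_nonpoles_leT hB; lia.
Qed.

Lemma cover_hfun A B : polestar_spec A -> polestar_spec B -> sps_le A B -> A != B ->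
  exists C, [/\ polestar_spec C, sps_le A C, sps_le C B & hfun C = (hfun A).+1].
Proof.
move=> hA hB hle ne; have [C [hC l1 l2 e]] := cover_nonpoles hA hB hle ne.
exists C; split => //; rewrite (hfunE hA) (hfunE hC).
have := card_nonpoles_leT hA; have := card_nonpoles_leT hC; lia.
Qed.

Lemma hfun_lt A B : polestar_spec A -> polestar_spec B -> sps_le A B -> A != B -> hfun A < hfun B.
Proof.
move=> hA hB hle ne; have [C [hC l1 l2 e]] := cover_hfun hA hB hle ne.
by rewrite -e; apply: hfun_le.
Qed.

Lemma sps_le_anti A B : polestar_spec A -> polestar_spec B -> sps_le A B -> sps_le B A -> A = B.
Proof.
move=> hA hB l1 l2; apply/eqP; apply: contraT => ne.
have := hfun_lt hA hB l1 ne; have := hfun_le hB hA l2; lia.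
Qed.

Lemma min_sys_spec : polestar_spec (min_sys T).
Proof.
constructor.
- by move=> p /imsetP [x _ ->] /=; apply/set0Pn; exists x; rewrite set11.
- by move=> p /imsetP [x _ ->] /=; exact: disjoints0.
- by move=> x; exists ([set x], set0); [apply: imset_f | rewrite set11].
- move=> p q x /imsetP [a _ ->] /imsetP [b _ ->] /=; rewrite !inE => /eqP -> /eqP ->.
  by [].
- by move=> p /imsetP [x _ ->] /=; rewrite eqxx.
- by move=> p /imsetP [x _ ->] /=; rewrite eqxx.
Qed.

Lemma max_sys_spec : 0 < #|T| -> polestar_spec (max_sys T).
Proof.
move=> hX; constructor.
- move=> p; rewrite inE => /eqP -> /=; apply/set0Pn.
  by case/card_gt0P: hX => x _; exists x; rewrite inE.
- by move=> p; rewrite inE => /eqP -> /=; exact: disjoints0.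
- by move=> x; exists ([set: T], set0); rewrite ?inE.
- by move=> p q x; rewrite !inE => /eqP -> /eqP ->.
- by move=> p; rewrite inE => /eqP -> /=; rewrite eqxx.
- by move=> p; rewrite inE => /eqP -> /=; rewrite eqxx.
Qed.

Lemma min_sys_le A : polestar_spec A -> sps_le (min_sys T) A.
Proof.
move=> hA; apply: sps_leI.
- move=> p /imsetP [x _ ->]; have [q qA xq] := ps_cover hA x.
  exists q => //; rewrite /sp_le; apply/or4P; constructor 2.
  by rewrite /= setU0 sub1set.
- by move=> q qA ne [p /imsetP [x _ ->] /= e]; move: ne; rewrite -e eqxx.
Qed.

Lemma le_max_sys A : sps_le A (max_sys T).
Proof.
apply: sps_leI.
- move=> p pA; exists ([set: T], set0); first by rewrite inE.
  by rewrite /sp_le; apply/or4P; constructor 2; apply: subsetT.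
- by move=> q; rewrite inE => /eqP -> /=; rewrite eqxx.
Qed.

Lemma hfun_min_sys : hfun (min_sys T) = 0.
Proof.
rewrite (hfunE min_sys_spec).
have -> : nonpoles (min_sys T) = min_sys T.
  apply/setP => p; rewrite inE; case: (boolP (p \in min_sys T)) => //= pm.
  apply/negP => /is_poleP [q /imsetP [x _ ->] [ne _]]; by move: ne; rewrite eqxx.
rewrite card_imset ?cardT ?subnn //.
by move=> x y [] /setP /(_ x); rewrite !inE eqxx => /esym /eqP.
Qed.

Lemma hfun_max_sys : 0 < #|T| -> hfun (max_sys T) = #|T| - 1.
Proof.
move=> hX; rewrite (hfunE (max_sys_spec hX)).
have -> : nonpoles (max_sys T) = max_sys T.
  apply/setP => p; rewrite inE; case: (boolP (p \in max_sys T)) => //= pm.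
  apply/negP => /is_poleP [q]; rewrite inE => /eqP -> [ne _]; by move: ne; rewrite eqxx.
by rewrite cards1.
Qed.

Lemma chain_spec D a : is_chain D -> a \in D -> polestar_spec a.
Proof. by case=> _ [h _] /h /polestarP. Qed.

Lemma chain1 c : polestar c -> is_chain [set c].
Proof.
move=> hc; split; first by apply/set0Pn; exists c; rewrite set11.
split=> [a|a b]; rewrite !inE => /eqP -> //.
by move/eqP ->; left; apply: sps_le_refl.
Qed.

Lemma chain_setU1 D c : is_chain D -> polestar c ->
  (forall d, d \in D -> sps_le d c \/ sps_le c d) -> is_chain (c |: D).
Proof.
case=> _ [pol cmp] hc cmpc; split; first by apply/set0Pn; exists c; rewrite setU11.
split=> [a|a b]; rewrite !inE; first by case/orP => [/eqP ->|/pol].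
case/orP => [/eqP ->|aD] /orP [/eqP ->|bD].
- by left; apply: sps_le_refl.
- by case: (cmpc _ bD); [right|left].
- exact: cmpc.
- exact: cmp.
Qed.

Lemma maximal_chain_mem D c : maximal_chain D -> polestar c ->
  (forall d, d \in D -> sps_le d c \/ sps_le c d) -> c \in D.
Proof.
case=> hD hmax hc cmpc.
by rewrite -(hmax _ (chain_setU1 hD hc cmpc) (subsetUr _ _)) setU11.
Qed.

Lemma chain_le_hfun D a b : is_chain D -> a \in D -> b \in D -> hfun a <= hfun b -> sps_le a b.
Proof.
move=> hD aD bD hab; have ha := chain_spec hD aD; have hb := chain_spec hD bD.
case: hD => _ [_ cmp]; case: (cmp _ _ aD bD) => // lba.
case: (eqVneq b a) => [->|nba]; first exact: sps_le_refl.
by have := hfun_lt hb ha lba nba; lia.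
Qed.

Lemma card_chain_le D A : polestar_spec A -> is_chain D -> (forall b, b \in D -> sps_le b A) ->
  #|D| <= (hfun A).+1.
Proof.
move=> hA hD hle.
pose f (a : sps T) : 'I_(hfun A).+1 := inord (hfun a).
have hb : forall a, a \in D -> hfun a < (hfun A).+1.
  by move=> a aD; rewrite ltnS; apply: hfun_le (chain_spec hD aD) hA (hle _ aD).
have inj : {in D &, injective f}.
  move=> a b aD bD /(f_equal (@nat_of_ord _)); rewrite /f !inordK ?hb // => e.
  apply: sps_le_anti (chain_spec hD aD) (chain_spec hD bD) _ _; apply: chain_le_hfun hD _ _ _ => //; by rewrite e.
rewrite -(card_in_imset inj); apply: leq_trans (max_card _) _; by rewrite card_ord.
Qed.

Lemma chain_of_height A : polestar_spec A -> forall j, j <= hfun A -> exists D m,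
  [/\ is_chain D, (forall b, b \in D -> sps_le b m), sps_le m A /\ polestar_spec m
    & hfun m = j /\ #|D| = j.+1].
Proof.
move=> hA; elim=> [_|j IH hj].
  exists [set min_sys T], (min_sys T); split; rewrite ?set11 ?cards1 ?hfun_min_sys //.
  - by apply: chain1; apply/polestarP; exact: min_sys_spec.
  - by move=> b; rewrite inE => /eqP ->; apply: sps_le_refl.
  - by split; [apply: min_sys_le | exact: min_sys_spec].
have [D [m [hD bm [mA hm] [em cD]]]] := IH (ltnW hj).
have nmA : m != A by apply/eqP => e; move: hj; rewrite -e em ltnn.
have [c [hc l1 l2 ec]] := cover_hfun hm hA mA nmA.
have cD' : c \notin D by apply/negP => /bm /(hfun_le hc hm); rewrite ec em ltnn.
have below_c : forall b, b \in c |: D -> sps_le b c.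
  move=> b; rewrite !inE => /orP [/eqP ->|bD]; first exact: sps_le_refl.
  exact: sps_le_trans (chain_spec hD bD) hm hc (bm _ bD) l1.
exists (c |: D), c; split => //.
- apply: chain_setU1 => //; first exact/polestarP.
  by move=> d dD; left; apply: below_c; rewrite !inE dD orbT.
- by rewrite ec em cardsU1 cD' cD.
Qed.

Lemma maximal_chain_min D : maximal_chain D -> min_sys T \in D.
Proof.
move=> hD; have [hC _] := hD.
apply: (maximal_chain_mem hD) => [|d dD]; first by apply/polestarP; exact: min_sys_spec.
by right; apply: min_sys_le (chain_spec hC dD).
Qed.

Lemma maximal_chain_max D : 0 < #|T| -> maximal_chain D -> max_sys T \in D.
Proof.
move=> hX hD; apply: (maximal_chain_mem hD) => [|d _]; last by left; apply: le_max_sys.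
by apply/polestarP; exact: max_sys_spec.
Qed.

(* Otherwise the cover of the last element below level k and the first above it could be inserted. *)
Lemma maximal_chain_hfun D k : 0 < #|T| -> maximal_chain D -> k < #|T| ->
  exists2 a, a \in D & hfun a = k.
Proof.
move=> hX hD hk; have [hC _] := hD; apply: NNPP => nk.
have nk' : forall a, a \in D -> hfun a != k by move=> a aD; apply/eqP => e; apply: nk; exists a.
have minD := maximal_chain_min hD; have maxD := maximal_chain_max hX hD.
have k0 : 0 < k by move: (nk' _ minD); rewrite hfun_min_sys lt0n eq_sym.
have kT : k < #|T| - 1 by move: (nk' _ maxD); rewrite hfun_max_sys //; lia.
pose below a := (a \in D) && (hfun a < k); pose above a := (a \in D) && (k < hfun a).
have Lmin : below (min_sys T) by rewrite /below minD hfun_min_sys.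
have Umax : above (max_sys T) by rewrite /above maxD hfun_max_sys.
case: (arg_maxnP (@hfun T) Lmin) => a0 /andP [a0D a0k] amax.
case: (arg_minnP (@hfun T) Umax) => b0 /andP [b0D b0k] bmin.
have ha0 := chain_spec hC a0D; have hb0 := chain_spec hC b0D.
have lab : sps_le a0 b0 by apply: chain_le_hfun hC a0D b0D _; lia.
have nab : a0 != b0 by apply/eqP => e; move: a0k b0k; rewrite e; lia.
have [c [hc l1 l2 ec]] := cover_hfun ha0 hb0 lab nab.
have cD : c \in D.
  apply: (maximal_chain_mem hD) => [|d dD]; first exact/polestarP. have hd := chain_spec hC dD.
  case: (ltngtP (hfun d) k) => [dk|kd|dk]; last by move: (nk' _ dD); rewrite dk eqxx.
  + left; have := amax d; rewrite /below dD dk => /(_ isT) da.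
    exact: sps_le_trans hd ha0 hc (chain_le_hfun hC dD a0D da) l1.
  + right; have := bmin d; rewrite /above dD kd => /(_ isT) bd.
    exact: sps_le_trans hc hb0 hd l2 (chain_le_hfun hC b0D dD bd).
have ck : hfun c < k by rewrite ltn_neqAle (nk' _ cD) ec.
by move: (amax c); rewrite /below cD ck => /(_ isT) /=; rewrite leqNgt ec leqnn.
Qed.

Lemma card_maximal_chain D : 0 < #|T| -> maximal_chain D -> #|D| = #|T|.
Proof.
move=> hX hD; have [hC _] := hD; apply/eqP; rewrite eqn_leq; apply/andP; split.
  have := card_chain_le (max_sys_spec hX) hC (fun b _ => le_max_sys b).
  by rewrite hfun_max_sys //; lia.
pose f (a : sps T) : 'I_#|T| := insubd (Ordinal hX) (hfun a).
have : [set: 'I_#|T|] \subset f @: D.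
  apply/subsetP => i _; have [a aD ea] := maximal_chain_hfun hX hD (ltn_ord i).
  by apply/imsetP; exists a => //; apply: val_inj; rewrite /f val_insubd ea ltn_ord.
move/subset_leq_card; rewrite cardsT card_ord => h1.
exact: leq_trans h1 (leq_imset_card _ _).
Qed.

Lemma is_height_hfun A : polestar_spec A -> is_height A (hfun A).
Proof.
move=> hA; split=> [|D hD hle]; last by have := card_chain_le hA hD hle; rewrite /chain_length; lia.
have [D [m [hD bm [mA hm] [_ cD]]]] := chain_of_height hA (leqnn (hfun A)).
exists D; split => //; last by rewrite /chain_length cD.
by move=> b bD; apply: sps_le_trans (chain_spec hD bD) hm hA (bm _ bD) mA.
Qed.

Lemma graded_polestar : 0 < #|T| -> graded T.
Proof.
move=> hX D1 D2 hD1 hD2.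
by rewrite /chain_length (card_maximal_chain hX hD1) (card_maximal_chain hX hD2).
Qed.

End PolestarPoset.

Theorem mainTheorem8 (T : finType) (hX : 0 < #|T|) :
  (* partial order on polestar systems *)
  (forall A : sps T, polestar A -> sps_le A A) /\
  (forall A B : sps T, polestar A -> polestar B -> sps_le A B -> sps_le B A -> A = B) /\
  (forall A B C : sps T, polestar A -> polestar B -> polestar C ->
     sps_le A B -> sps_le B C -> sps_le A C) /\
  (* bounded, with the given minimum and maximum *)
  polestar (min_sys T) /\ polestar (max_sys T) /\
  (forall A : sps T, polestar A -> sps_le (min_sys T) A /\ sps_le A (max_sys T)) /\
  (* graded *)
  graded T /\
  (* height function *)
  (forall A : sps T, polestar A -> is_height A (hfun A) /\ hfun A <= #|T| - 1).
Proof.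
have spec := @spec_of_polestar T.
split; first by move=> A _; apply: sps_le_refl.
split; first by move=> A B /spec hA /spec hB; apply: sps_le_anti.
split; first by move=> A B C /spec hA /spec hB /spec hC; apply: sps_le_trans.
split; first exact/polestarP/min_sys_spec.
split; first exact/polestarP/(max_sys_spec hX).
split; first by move=> A /spec hA; split; [apply: min_sys_le | apply: le_max_sys].
split; first exact: graded_polestar.
move=> A /spec hA; split; first exact: is_height_hfun.
by rewrite -hfun_max_sys //; apply: hfun_le hA (max_sys_spec hX) (le_max_sys A).
Qed.
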